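(* Let $A=\{a_{ij}\}$ be a real $N\times N$ matrix satisfying condition (M), and let $D=\mathrm{diag}(d_{11},\dots,d_{NN})$ with $d_{ii}>0$ for all $i$ and $\sum_{i=1}^N d_{ii}a_{ij}\ge0$ for every $j$. Then for every $\sigma\in[0,1]$ and every $\Delta t>0$ the matrix $E+\Delta t\,\sigma A$ is invertible and $$\frac{\|D\|_1}{\max_j s_j}\le \left\|\left[E+\Delta t\,\sigma A\right]^{-1}\right\|_1\le \frac{\|D\|_1}{\min_j s_j},\qquad s_j:=d_{jj}+\Delta t\,\sigma\sum_{i=1}^N d_{ii}a_{ij}.$$
   Context: $E$ is the $N\times N$ identity. Condition (M) on a real $N\times N$ matrix $A=\{a_{ij}\}$: $a_{ii}\ge 0$ for all $i$ and $a_{ij}\le 0$ for all $i\ne j$. For vectors $\|y\|_1=\sum_i|y_i|$ and for matrices $\|A\|_1=\max_j\sum_i|a_{ij}|$ (so $\|D\|_1=\max_i d_{ii}$). *)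

From mathcomp Require Import all_boot all_order all_algebra.
Set Implicit Arguments. Unset Strict Implicit. Unset Printing Implicit Defensive.
Import Order.TTheory GRing.Theory Num.Theory.
Local Open Scope ring_scope.

Definition condM (R : realFieldType) (n : nat) (A : 'M[R]_n) : Prop :=
  (forall i, 0 <= A i i) /\ (forall i j, i != j -> A i j <= 0).

Definition mxnorm1 (R : realFieldType) (n : nat) (A : 'M[R]_n.+1) : R :=
  \big[Num.max/0]_(j < n.+1) \sum_(i < n.+1) `|A i j|.

Definition fmax (R : realFieldType) (n : nat) (s : 'I_n.+1 -> R) : R :=
  \big[Num.max/s ord0]_(j < n.+1) s j.
Definition fmin (R : realFieldType) (n : nat) (s : 'I_n.+1 -> R) : R :=
  \big[Num.min/s ord0]_(j < n.+1) s j.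

From mathcomp Require Import all_boot all_order all_algebra.
Set Implicit Arguments. Unset Strict Implicit. Unset Printing Implicit Defensive.
Import Order.TTheory GRing.Theory Num.Theory.
Local Open Scope ring_scope.

(* Put w i := D i i > 0 and M := 1 + dt*sigma*A.  M again satisfies
   condition (M), and its w-weighted column sums s j = \sum_i w i * M i j are
   exactly the numbers s_j of the statement, which are positive.  For a matrix
   B satisfying (M), the triangle inequality applied row by row (the diagonal
   term dominates the sign of every row) gives, for every vector y,
       \sum_k s k * |y k|  <=  \sum_i w i * |(B y) i|.                   (KEY)
   Hence B y = 0 forces y = 0, so M is invertible.  Applied to the columns of
   X := M^-1 (where M X = 1), (KEY) gives \sum_k s k |X k j| <= w j, while
   s^T X = w^T M X = w^T gives \sum_k s k X k j = w j exactly.  The inequality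
   yields the upper bound ||X||_1 <= ||D||_1 / min s and the identity the
   lower bound ||D||_1 <= max s * ||X||_1 (the columns of D have sums w j). *)

Section NormFacts.
Variables (R : realFieldType) (n : nat).

Lemma colsum_le_mxnorm1 (B : 'M[R]_n.+1) (j : 'I_n.+1) :
  \sum_i `|B i j| <= mxnorm1 B.
Proof. exact: le_bigmax. Qed.

Lemma mxnorm1_le (B : 'M[R]_n.+1) (c : R) :
  0 <= c -> (forall j, \sum_i `|B i j| <= c) -> mxnorm1 B <= c.
Proof. by move=> c0 hc; apply: bigmax_le => // j _; exact: hc. Qed.

Lemma mxnorm1_ge0 (B : 'M[R]_n.+1) : 0 <= mxnorm1 B.
Proof. exact: bigmax_ge_id. Qed.

Lemma colsum_diag (D : 'M[R]_n.+1) (j : 'I_n.+1) :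
  (forall i k, i != k -> D i k = 0) -> \sum_i `|D i j| = `|D j j|.
Proof.
move=> hdiag; rewrite (bigD1 j) //= big1 ?addr0 // => i hi.
by rewrite hdiag ?normr0.
Qed.

Lemma sum_mul_delta (F : 'I_n.+1 -> R) (j : 'I_n.+1) :
  \sum_i F i * (i == j)%:R = F j.
Proof.
rewrite (bigD1 j) //= eqxx mulr1 big1 ?addr0 // => i /negbTE ->.
by rewrite mulr0.
Qed.

Lemma fmin_le (s : 'I_n.+1 -> R) (j : 'I_n.+1) : fmin s <= s j.
Proof. exact: bigmin_le. Qed.

Lemma le_fmax (s : 'I_n.+1 -> R) (j : 'I_n.+1) : s j <= fmax s.
Proof. exact: le_bigmax. Qed.

Lemma fmin_gt0 (s : 'I_n.+1 -> R) : (forall j, 0 < s j) -> 0 < fmin s.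
Proof.
move=> spos; apply: (big_ind (fun x => 0 < x)) => // x y hx hy.
by rewrite lt_min hx hy.
Qed.

End NormFacts.

Lemma row_ineq (R : realFieldType) (n : nat) (b y : 'I_n.+1 -> R) (i : 'I_n.+1) :
  0 <= b i -> (forall k, k != i -> b k <= 0) ->
  \sum_k b k * `|y k| <= `| \sum_k b k * y k |.
Proof.
move=> hbi hbk.
rewrite (bigD1 i) //= [X in _ <= `|X|](bigD1 i) //=.
have -> : \sum_(k | k != i) b k * `|y k| = - \sum_(k | k != i) `|b k * y k|.
  rewrite -sumrN; apply: eq_bigr => k hk.
  by rewrite normrM (ler0_norm (hbk k hk)) mulNr opprK.
apply: le_trans (lerB_normD _ _).
rewrite normrM (ger0_norm hbi) lerD2l lerN2.
exact: ler_norm_sum.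
Qed.

Section ConditionM.
Variables (R : realFieldType) (n : nat).

Definition wcolsum (w : 'I_n.+1 -> R) (B : 'M[R]_n.+1) (k : 'I_n.+1) : R :=
  \sum_i w i * B i k.

Lemma condM_shift (B : 'M[R]_n.+1) (c : R) :
  condM B -> 0 <= c -> condM (1%:M + c *: B).
Proof.
move=> [hd ho] c0; split=> [i | i j hij]; rewrite !mxE.
  by rewrite eqxx addr_ge0 // mulr_ge0.
by rewrite (negbTE hij) add0r mulr_ge0_le0 // ho.
Qed.

Lemma wcolsum_bound (B : 'M[R]_n.+1) (w y : 'I_n.+1 -> R) :
  condM B -> (forall i, 0 <= w i) ->
  \sum_k wcolsum w B k * `|y k| <= \sum_i w i * `|\sum_k B i k * y k|.
Proof.
move=> [hd ho] w0.
have per_row i :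
    \sum_k (w i * B i k) * `|y k| <= w i * `|\sum_k B i k * y k|.
  have -> : w i * `|\sum_k B i k * y k| = `|\sum_k (w i * B i k) * y k|.
    under [in RHS]eq_bigr do rewrite -mulrA.
    by rewrite -mulr_sumr normrM ger0_norm.
  apply: (@row_ineq R n (fun k => w i * B i k) y i).
    exact: mulr_ge0.
  by move=> k hk; rewrite mulr_ge0_le0 // ho // eq_sym.
rewrite /wcolsum; under eq_bigr do rewrite mulr_suml.
by rewrite exchange_big /=; exact: ler_sum.
Qed.

Lemma condM_unitmx (B : 'M[R]_n.+1) (w : 'I_n.+1 -> R) :
  condM B -> (forall i, 0 <= w i) -> (forall k, 0 < wcolsum w B k) ->
  B \in unitmx.
Proof.
move=> hB w0 spos; rewrite -unitmx_tr unitmxE unitfE.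
apply/det0P => -[v vn0 vB].
have Bv0 j : \sum_k B j k * v 0 k = 0.
  have := congr1 (fun W : 'M[R]_(1, n.+1) => W 0 j) vB; rewrite !mxE => vBj.
  by rewrite -[RHS]vBj; apply: eq_bigr => k _; rewrite mxE mulrC.
have terms0 : \sum_k wcolsum w B k * `|v 0 k| = 0.
  apply/eqP; rewrite eq_le sumr_ge0 ?andbT => [|l _]; last first.
    exact: mulr_ge0 (ltW (spos l)) (normr_ge0 _).
  apply: le_trans (wcolsum_bound (fun k => v 0 k) hB w0) _.
  by rewrite big1 // => i _; rewrite Bv0 normr0 mulr0.
move/eqP: vn0; apply; apply/matrixP => i k; rewrite ord1 mxE.
have /eqP := @psumr_eq0P _ _ _ _ (fun k _ => mulr_ge0 (ltW (spos k)) (normr_ge0 (v 0 k)))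
  terms0 k isT.
by rewrite mulf_eq0 (gt_eqF (spos k)) normr_eq0 => /eqP.
Qed.

Lemma mulmxV_entry (B : 'M[R]_n.+1) (i j : 'I_n.+1) :
  B \in unitmx -> \sum_k B i k * invmx B k j = (i == j)%:R.
Proof.
by move=> hu; have := congr1 (fun W : 'M[R]_n.+1 => W i j) (mulmxV hu); rewrite !mxE.
Qed.

(* Columns of the inverse: exact weighted sums, since w^T B B^-1 = w^T ... *)
Lemma wcolsum_invmx (B : 'M[R]_n.+1) (w : 'I_n.+1 -> R) (j : 'I_n.+1) :
  B \in unitmx -> \sum_k wcolsum w B k * invmx B k j = w j.
Proof.
move=> hu; rewrite /wcolsum; under eq_bigr do rewrite mulr_suml.
rewrite exchange_big /=.
under eq_bigr do (under eq_bigr do rewrite -mulrA; rewrite -mulr_sumr mulmxV_entry //).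
exact: sum_mul_delta.
Qed.

Lemma wcolsum_norm_invmx (B : 'M[R]_n.+1) (w : 'I_n.+1 -> R) (j : 'I_n.+1) :
  condM B -> (forall i, 0 <= w i) -> B \in unitmx ->
  \sum_k wcolsum w B k * `|invmx B k j| <= w j.
Proof.
move=> hB w0 hu; apply: le_trans (wcolsum_bound (fun k => invmx B k j) hB w0) _.
under eq_bigr do rewrite mulmxV_entry // normr_nat.
by rewrite sum_mul_delta.
Qed.

End ConditionM.

(* N = n.+1 >= 1 is the dimension. *)
Theorem theorem2 (R : realFieldType) (n : nat) (A D : 'M[R]_n.+1)
  (hA : condM A)
  (hDdiag : forall i j, i != j -> D i j = 0)
  (hDpos : forall i, 0 < D i i)
  (hDA : forall j, 0 <= \sum_(i < n.+1) D i i * A i j)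
  (sigma dt : R) (hs0 : 0 <= sigma) (hs1 : sigma <= 1) (hdt : 0 < dt) :
  let M := 1%:M + (dt * sigma) *: A in
  let s := fun j : 'I_n.+1 => D j j + dt * sigma * \sum_(i < n.+1) D i i * A i j in
  M \in unitmx /\
  mxnorm1 D / fmax s <= mxnorm1 (invmx M) /\
  mxnorm1 (invmx M) <= mxnorm1 D / fmin s.
Proof.
move=> M s; pose w i := D i i.
have c0 : 0 <= dt * sigma by rewrite mulr_ge0 // ltW.
have w0 i : 0 <= w i := ltW (hDpos i).
have hM : condM M := condM_shift hA c0.
have sE k : wcolsum w M k = s k.
  rewrite /wcolsum /s /w; under eq_bigr do rewrite !mxE mulrDr mulrCA.
  by rewrite big_split /= -mulr_sumr sum_mul_delta.
have spos k : 0 < s k.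
  by rewrite /s (lt_le_trans (hDpos k)) // lerDl mulr_ge0.
have hu : M \in unitmx by apply: (condM_unitmx hM w0) => k; rewrite sE.
have colD j : \sum_i `|D i j| = D j j by rewrite colsum_diag // ger0_norm ?w0.
have fmax0 : 0 < fmax s := lt_le_trans (spos ord0) (le_fmax _ ord0).
have fmin0 : 0 < fmin s := fmin_gt0 spos.
split=> //; split.
- rewrite ler_pdivrMr // mulrC mxnorm1_le ?mulr_ge0 ?mxnorm1_ge0 ?ltW // => j.
  rewrite colD -[D j j]/(w j) -(wcolsum_invmx w j hu).
  apply: (le_trans (y := \sum_k fmax s * `|invmx M k j|)).
    apply: ler_sum => k _; rewrite sE (le_trans (ler_norm _)) //.
    by rewrite normrM gtr0_norm // ler_wpM2r // le_fmax.
  by rewrite -mulr_sumr ler_wpM2l ?colsum_le_mxnorm1 // ltW.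
- rewrite mxnorm1_le ?divr_ge0 ?mxnorm1_ge0 ?ltW // => j.
  rewrite ler_pdivlMr // (le_trans _ (colsum_le_mxnorm1 D j)) // colD.
  apply: le_trans (wcolsum_norm_invmx j hM w0 hu); rewrite mulr_suml.
  by apply: ler_sum => k _; rewrite sE mulrC ler_wpM2r ?fmin_le.
Qed.
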